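(* Let $\mathcal W\in{\rm Gr}^{(0)}_+$ with wave function $\Psi$ and canonical operator $\mathtt Q_{\mathcal W}$. If $\mathtt B=\sum_{k\ge0}\mathtt B_k\partial_z^k\in\mathcal D$ satisfies $\mathtt B_0=\Psi$ and $\mathtt Q_{\mathcal W}\,\mathtt B=\mathtt B\,z$, then $\mathtt B=\mathtt G_{\mathcal W}$.
   Context: $H_+=\mathbb C[z]$, $H_-=z^{-1}\mathbb C[[z^{-1}]]$, $H=H_+\oplus H_-$. ${\rm Gr}^{(0)}_+$ is the set of closed subspaces $\mathcal W\subset H$ with $\pi_+:\mathcal W\to H_+$ (projection along $H_-$) an isomorphism. $\mathcal D=\mathbb C((z^{-1}))[[\partial_z]]$ is the ring of differential operators $\sum_{m\ge0}a_m(z)\partial_z^m$, $a_m\in H$, acting on $H$; $\mathcal D_\pm=H_\pm[[\partial_z]]$. $\mathtt G_{\mathcal W}$ is the unique operator with $\mathtt G_{\mathcal W}-1\in\mathcal D_-$ and $\mathcal W=\mathtt G_{\mathcal W}\cdot H_+$ (Sato's theorem); $\mathtt Q_{\mathcal W}:=\mathtt G_{\mathcal W}z\mathtt G_{\mathcal W}^{-1}$. The wave function $\Psi$ is the unique element of $\mathcal W\cap(1+H_-)$. *)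

From HB Require Import structures.
From mathcomp Require Import all_boot all_order all_algebra.
From mathcomp Require Import reals complex.
From Stdlib Require Import ClassicalEpsilon.
Set Implicit Arguments. Unset Strict Implicit. Unset Printing Implicit Defensive.
Import Order.TTheory GRing.Theory Num.Theory.
Local Open Scope ring_scope.

Section SatoDefs.
Variable C : fieldType.

(** Formal Laurent series: f n is the coefficient of z^n (n : int). *)
Definition lser := int -> C.

(** H = H_+ (+) H_- = C[z] (+) z^{-1}C[[z^{-1}]] : support bounded above. *)
Definition inH (f : lser) : Prop := exists N : int, forall n : int, N < n -> f n = 0.
Definition inHplus (f : lser) : Prop := inH f /\ (forall n : int, n < 0 -> f n = 0).
Definition inHminus (f : lser) : Prop := forall n : int, 0 <= n -> f n = 0.

Definition proj_plus (f : lser) : lser := fun n => if 0 <= n then f n else 0.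

(** Sum of a finitely supported family indexed by nat (junk 0 otherwise). *)
Definition fsumN (u : nat -> C) : C :=
  match excluded_middle_informative
          (exists K : nat, forall m : nat, (K <= m)%N -> u m = 0) with
  | left h => \sum_(m < proj1_sig (constructive_indefinite_description _ h)) u m
  | right _ => 0
  end.

(** Sum of a finitely supported family indexed by int (junk 0 otherwise). *)
Definition fsumZ (u : int -> C) : C :=
  match excluded_middle_informative
          (exists K : nat, forall i : int, (K < absz i)%N -> u i = 0) with
  | left h =>
      let K := proj1_sig (constructive_indefinite_description _ h) in
      \sum_(i < (K.*2).+1) u (i%:Z - K%:Z)
  | right _ => 0
  end.

Definition lmul (f g : lser) : lser := fun n => fsumZ (fun i => f i * g (n - i)).
Definition lderiv (f : lser) : lser := fun n => (n + 1)%:~R * f (n + 1).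
Definition lderivn (k : nat) (f : lser) : lser := iter k lderiv f.
Definition lone : lser := fun n => if n == 0 then 1 else 0.
Definition lz : lser := fun n => if n == 1 then 1 else 0.

(** Differential operators sum_m A m * d_z^m *)
Definition op := nat -> lser.
(** membership in D = H[[d_z]] and in D_- = H_-[[d_z]] *)
Definition inD (A : op) : Prop := forall m, inH (A m).
Definition inDminus (A : op) : Prop := forall m, inHminus (A m).

Definition op1 : op := fun m => if m == 0%N then lone else (fun _ => 0).
Definition opz : op := fun m => if m == 0%N then lz else (fun _ => 0).
Definition opsub (A B : op) : op := fun m n => A m n - B m n.

(** Composition in D, via Leibniz' rule
    (a d^m)(b d^l) = sum_j 'C(m,j) a b^(j) d^(m+l-j):
    the coefficient of d^k is sum_(l <= k) sum_(i >= 0) 'C(k-l+i,i) A_(k-l+i) B_l^(i),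
    the inner (infinite) sum being taken coefficientwise. *)
Definition dcomp (A B : op) : op := fun k d =>
  \sum_(l < k.+1)
     fsumN (fun i => ('C(k - l + i, i))%:R *
                     lmul (A (k - l + i)%N) (lderivn i (B l)) d).

Definition act (A : op) (f : lser) : lser := fun d =>
  fsumN (fun m => lmul (A m) (lderivn m f) d).

Definition opinv (A : op) : op :=
  epsilon (inhabits op1) (fun X => inD X /\ dcomp A X = op1 /\ dcomp X A = op1).

Definition Qop (G : op) : op := dcomp (dcomp G opz) (opinv G).

(** Gr^(0)_+ : closed subspaces W of H such that pi_+ : W -> H_+ is an isomorphism.
    Closedness is with respect to the z^{-1}-adic topology of H. *)
Definition Gr0plus (W : lser -> Prop) : Prop :=
  (forall w, W w -> inH w) /\
  [/\ W (fun _ => 0),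
      (forall (a : C) u v, W u -> W v -> W (fun n => a * u n + v n)),
      (forall f, inH f ->
          (forall N : nat, exists w, W w /\ forall n : int, - (N%:Z) < n -> f n = w n) ->
          W f),
      (forall w1 w2, W w1 -> W w2 -> proj_plus w1 = proj_plus w2 -> w1 = w2) &
      (forall p, inHplus p -> exists w, W w /\ proj_plus w = p)].

Definition is_sato_op (W : lser -> Prop) (G : op) : Prop :=
  inDminus (opsub G op1) /\
  (forall f, W f <-> exists p, inHplus p /\ act G p = f).

Definition is_wave_fn (W : lser -> Prop) (Psi : lser) : Prop :=
  W Psi /\ inHminus (fun n => Psi n - lone n).

End SatoDefs.

From HB Require Import structures.
From mathcomp Require Import all_boot all_order all_algebra.
From mathcomp Require Import reals complex.
From mathcomp Require Import zify ring.
From Stdlib Require Import ClassicalEpsilon Classical.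
Set Implicit Arguments. Unset Strict Implicit. Unset Printing Implicit Defensive.
Import Order.TTheory GRing.Theory Num.Theory.
Local Open Scope ring_scope.

(** Proof.  (1) Comparing coefficients of d_z^k in Q B = B z gives
    (Q B)_k = z B_k + (k+1) B_(k+1), where (Q B)_k only involves
    B_0, ..., B_k; so B is determined by B_0 ([intertwiner_unique]).
    (2) G is a solution: the two-sided inverse of G exists (the action of G
    on series bounded above is unitriangular, hence bijective, and G X = 1
    can be solved order by order in d_z), so Q G = G z G^(-1) G = G z ([QG]).
    (3) G_0 = G . 1 lies in W and projects to 1 in H_+, so G_0 = Psi. *)


(** * Finitely supported sums

    [fsumN] and [fsumZ] are the only infinite sums in the definitions; both
    agree with an ordinary big sum over any duplicate-free list containing
    the support.  All their algebraic properties follow from this single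
    characterisation, which we abstract as [is_fsum]. *)

Section FiniteSupportSums.
Variable C : numFieldType.

Definition is_fsum (T : eqType) (S : (T -> C) -> C) : Prop :=
  forall u s, uniq s -> (forall x, u x != 0 -> x \in s) -> S u = \sum_(x <- s) u x.

Lemma big_supp (T : eqType) (u : T -> C) (s t : seq T) :
  uniq s -> uniq t -> (forall x, u x != 0 -> x \in s) ->
  (forall x, u x != 0 -> x \in t) ->
  \sum_(x <- s) u x = \sum_(x <- t) u x.
Proof.
move=> us ut hs ht.
rewrite -(big_rmcond_in (fun x => u x != 0)); last by move=> x _ /negPn/eqP.
rewrite -[RHS](big_rmcond_in (fun x => u x != 0)); last by move=> x _ /negPn/eqP.
rewrite -big_filter -[RHS]big_filter; apply: perm_big.
apply: uniq_perm; rewrite ?filter_uniq // => x; rewrite !mem_filter.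
by case: (boolP (u x != 0)) => //= /[dup] /hs -> /ht ->.
Qed.

Lemma fsumN_supp : is_fsum (@fsumN C).
Proof.
move=> u s us hs; rewrite /fsumN.
case: excluded_middle_informative => [h|h].
  case: (constructive_indefinite_description _ h) => K /= HK.
  rewrite -(big_mkord xpredT) /index_iota subn0; apply: big_supp; rewrite ?iota_uniq //.
  move=> m /[dup] um /hs _; rewrite mem_iota /= add0n.
  by case: ltnP => // /HK Hm; rewrite Hm eqxx in um.
exfalso; apply: h; exists (\max_(m <- s) m).+1 => m hm.
apply/eqP; apply: contraTT hm => /hs ms; rewrite -ltnNge ltnS.
exact: (leq_bigmax_seq _ ms).
Qed.

Lemma fsumZ_supp : is_fsum (@fsumZ C).
Proof.
move=> u s us hs; rewrite /fsumZ.
case: excluded_middle_informative => [h|h].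
  case: (constructive_indefinite_description _ h) => K /= HK.
  rewrite -(big_mkord xpredT (fun i : nat => u (i%:Z - K%:Z))) /index_iota subn0.
  rewrite -(big_map (fun i : nat => i%:Z - K%:Z) xpredT u).
  apply: big_supp => //.
    rewrite map_inj_uniq ?iota_uniq // => a b /eqP; rewrite subr_eq addrNK.
    by move/eqP => [].
  move=> x ux; have hx : (absz x <= K)%N.
    by rewrite leqNgt; apply/negP => /HK hx; rewrite hx eqxx in ux.
  apply/mapP; exists (absz (x + K%:Z)); last by lia.
  by rewrite mem_iota add0n /=; lia.
exfalso; apply: h; exists (\max_(x <- s) absz x) => x hx.
apply/eqP; apply: contraTT hx => /hs ms; rewrite -leqNgt.
exact: (leq_bigmax_seq _ ms).
Qed.

Section Laws.
Variables (T : eqType) (S : (T -> C) -> C).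
Hypothesis HS : is_fsum S.

Definition fin (u : T -> C) := exists s : seq T, forall x, u x != 0 -> x \in s.

Lemma S_list u s : (forall x, u x != 0 -> x \in s) -> S u = \sum_(x <- undup s) u x.
Proof. by move=> h; apply: HS; rewrite ?undup_uniq // => x /h; rewrite mem_undup. Qed.

Lemma S0 u : (forall x, u x = 0) -> S u = 0.
Proof. by move=> h; rewrite (HS (s := [::])) ?big_nil // => x; rewrite h eqxx. Qed.

Lemma S_ext u v : (forall x, u x = v x) -> S u = S v.
Proof. by move=> h; have -> : u = v by apply: boolp.funext. Qed.

Lemma S_neq0 u : S u != 0 -> exists x, u x != 0.
Proof.
move=> h; apply: NNPP => hn; move/eqP: h; apply; apply: S0 => x.
by apply/eqP; apply: NNPP => hx; apply: hn; exists x; apply/negP.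
Qed.

Lemma S_single u a : (forall x, x != a -> u x = 0) -> S u = u a.
Proof.
move=> h; rewrite (HS (s := [:: a])) ?big_seq1 // => x; apply: contraR => xa.
by apply/eqP; apply: h; move: xa; rewrite inE.
Qed.

Lemma fin_scale c u : fin u -> fin (fun x => c * u x).
Proof. by move=> [su hu]; exists su => x; rewrite mulf_eq0 negb_or => /andP[_ /hu]. Qed.

Lemma S_add u v : fin u -> fin v -> S (fun x => u x + v x) = S u + S v.
Proof.
move=> [su hu] [sv hv]; rewrite !(S_list (s := su ++ sv)) ?big_split //.
- by move=> x /hv; rewrite mem_cat orbC => ->.
- by move=> x /hu; rewrite mem_cat => ->.
move=> x hx; rewrite mem_cat.
case: (boolP (u x != 0)) => [/hu -> //|/negPn/eqP ux].
by rewrite ux add0r in hx; rewrite (hv _ hx) orbT.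
Qed.

Lemma S_scale c u : fin u -> S (fun x => c * u x) = c * S u.
Proof.
move=> [su hu]; rewrite (S_list (s := su) (u := fun x => c * u x)); last first.
  by move=> x; rewrite mulf_eq0 negb_or => /andP[_ /hu].
by rewrite (S_list (s := su) hu) mulr_sumr.
Qed.

Lemma S_sum (J : Type) (r : seq J) (F : J -> T -> C) :
  (forall j, fin (F j)) -> S (fun x => \sum_(j <- r) F j x) = \sum_(j <- r) S (F j).
Proof.
move=> hF; elim: r => [|j r ih]; first by rewrite big_nil S0 // => x; rewrite big_nil.
rewrite big_cons -ih -S_add //; first by apply: S_ext => x; rewrite big_cons.
elim: r {ih} => [|k r [s hs]]; first by exists [::] => x; rewrite big_nil eqxx.
case: (hF k) => sk hk; exists (sk ++ s) => x; rewrite big_cons mem_cat => hx.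
case: (boolP (F k x != 0)) => [/hk -> //|/negPn/eqP ux].
by rewrite ux add0r in hx; rewrite (hs _ hx) orbT.
Qed.

Lemma S_bij (f g : T -> T) u :
  cancel f g -> cancel g f -> fin u -> S (fun x => u (f x)) = S u.
Proof.
move=> fK gK [s hs]; rewrite (S_list (s := map g s)); last first.
  by move=> x /hs h; apply/mapP; exists (f x).
rewrite (S_list (s := s)) // undup_map_inj; last exact: can_inj gK.
by rewrite big_map; apply: eq_bigr => x _; rewrite gK.
Qed.
End Laws.

Lemma S_fubini (T1 T2 : eqType) (S1 : (T1 -> C) -> C) (S2 : (T2 -> C) -> C)
    (F : T1 -> T2 -> C) (s1 : seq T1) (s2 : seq T2) :
  is_fsum S1 -> is_fsum S2 ->
  (forall x y, F x y != 0 -> x \in s1 /\ y \in s2) ->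
  S1 (fun x => S2 (F x)) = S2 (fun y => S1 (fun x => F x y)).
Proof.
move=> HS1 HS2 h.
have in1 x y : F x y != 0 -> x \in s1 by move/h => [].
have in2 x y : F x y != 0 -> y \in s2 by move/h => [].
rewrite (S_list HS1 (s := s1)); last first.
  move=> x; apply: contraR => xs; apply/eqP; apply: (S0 HS2) => y.
  by apply/eqP; apply: contraR xs => /in1.
rewrite (S_list HS2 (s := s2)); last first.
  move=> y; apply: contraR => ys; apply/eqP; apply: (S0 HS1) => x.
  by apply/eqP; apply: contraR ys => /in2.
transitivity (\sum_(x <- undup s1) \sum_(y <- undup s2) F x y).
  by apply: eq_bigr => x _; apply: (S_list HS2) => y /in2.
rewrite exchange_big; apply: eq_bigr => y _.
by symmetry; apply: (S_list HS1) => x /in1.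
Qed.

Lemma finN_box (u : nat -> C) (K : nat) :
  (forall m, u m != 0 -> (m < K)%N) -> fin u.
Proof. by move=> h; exists (iota 0 K) => m /h; rewrite mem_iota add0n. Qed.

Lemma fin_bound (u : nat -> C) : fin u -> exists K, forall m, u m != 0 -> (m < K)%N.
Proof.
move=> [s hs]; exists (\max_(x <- s) x).+1 => m /hs ms; rewrite ltnS.
exact: (leq_bigmax_seq _ ms).
Qed.

Definition zbox (a b : int) : seq int := [seq a + i%:Z | i <- iota 0 (absz (b - a)).+1].

Lemma mem_zbox a b x : a <= x <= b -> x \in zbox a b.
Proof.
move=> /andP[h1 h2]; apply/mapP; exists (absz (x - a)); last by lia.
by rewrite mem_iota add0n; lia.
Qed.

Lemma finZ_box (u : int -> C) (a b : int) :
  (forall x, u x != 0 -> a <= x <= b) -> fin u.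
Proof. by move=> h; exists (zbox a b) => x /h /mem_zbox. Qed.

Lemma fsumN_ord (u : nat -> C) (K : nat) :
  (forall m, u m != 0 -> (m < K)%N) -> fsumN u = \sum_(m < K) u m.
Proof.
move=> h; rewrite (fsumN_supp (s := iota 0 K)) ?iota_uniq //; last first.
  by move=> m /h; rewrite mem_iota add0n.
by rewrite -(big_mkord xpredT) /index_iota subn0.
Qed.

Lemma fsumN_if (F : nat -> C) k :
  \sum_(0 <= l < k.+1) F l = fsumN (fun l => if (l <= k)%N then F l else 0).
Proof.
rewrite (fsumN_ord (K := k.+1)); last by move=> m; case: ifP => //; rewrite eqxx.
rewrite -(big_mkord xpredT (fun l => if (l <= k)%N then F l else 0)).
by apply: eq_big_nat => l /andP[_ hl]; rewrite -ltnS hl.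
Qed.

Lemma fsumN_shift (X : nat -> C) j : fin X ->
  fsumN (fun m => if (j <= m)%N then X m else 0) = fsumN (fun p => X (p + j)%N).
Proof.
move=> /fin_bound [K hK].
rewrite (fsumN_ord (K := K + j)); last first.
  by move=> m; case: ifP => _; [move/hK => h; lia|rewrite eqxx].
rewrite (fsumN_ord (K := K)); last by move=> m /hK h; lia.
rewrite -(big_mkord xpredT (fun m => if (j <= m)%N then X m else 0)).
rewrite -(big_mkord xpredT (fun p => X (p + j)%N)) (big_cat_nat _ (n := j)) //=; last by lia.
rewrite big1_seq ?add0r; last first.
  by move=> m; rewrite mem_index_iota => hm; case: ifP => // h; lia.
rewrite -{1}(add0n j) big_addn addnK; apply: eq_big_nat => p _.
by rewrite leq_addl.
Qed.

Lemma neq0_mulr (a b : C) : a * b != 0 -> b != 0.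
Proof. by apply: contraNneq => ->; rewrite mulr0. Qed.

Lemma if_neq0 (b : bool) (x : C) : (if b then x else 0) != 0 -> b /\ x != 0.
Proof. by case: b => //; rewrite eqxx. Qed.

(** The change of summation indices behind the associativity of Leibniz'
    rule: with [m = k - l + i] and [k = l + (m - j)] the triple sums
    over [(k, l <= k, i)] and over [(m, l, j <= m)] agree, provided the
    family [Phi] is finitely supported in its last two indices. *)
Lemma reindexN (Phi : nat -> nat -> nat -> nat -> C) K :
  (forall m l j k, Phi m l j k != 0 -> (j < K)%N /\ (k < K)%N) ->
  fsumN (fun k => \sum_(0 <= l < k.+1)
     fsumN (fun i => 'C(k - l + i, i)%:R * Phi (k - l + i)%N l i k))
  = fsumN (fun m => fsumN (fun l =>
     \sum_(0 <= j < m.+1) 'C(m, j)%:R * Phi m l j (l + (m - j))%N)).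
Proof.
move=> hP; have HN := fsumN_supp.
under S_ext => k do rewrite fsumN_if.
under [RHS]S_ext => m do under S_ext => l do rewrite fsumN_if.
rewrite (S_fubini (s1 := iota 0 K) (s2 := iota 0 K) HN HN); last first.
  move=> k l /if_neq0 [hlk /(S_neq0 HN) [i /neq0_mulr /hP [_ hk]]].
  by rewrite !mem_iota; lia.
have finX l : fin (fun k =>
    fsumN (fun i => 'C(k - l + i, i)%:R * Phi (k - l + i)%N l i k)).
  by apply: (finN_box (K := K)) => k /(S_neq0 HN) [i /neq0_mulr /hP [_ hk]].
under S_ext => l do rewrite (fsumN_shift _ (finX l)).
rewrite [RHS](S_fubini (s1 := iota 0 (K + K)) (s2 := iota 0 K) HN HN); last first.
  move=> m l /(S_neq0 HN) [j /if_neq0 [hjm /neq0_mulr /hP [hj hk]]].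
  by rewrite !mem_iota; lia.
apply: S_ext => l.
rewrite [RHS](S_fubini (s1 := iota 0 (K + K)) (s2 := iota 0 K) HN HN); last first.
  by move=> m j /if_neq0 [hjm /neq0_mulr /hP [hj hk]]; rewrite !mem_iota; lia.
rewrite [LHS](S_fubini (s1 := iota 0 K) (s2 := iota 0 K) HN HN); last first.
  by move=> q i /neq0_mulr /hP [hi hk]; rewrite !mem_iota; lia.
apply: S_ext => i; rewrite fsumN_shift; last first.
  by apply: (finN_box (K := K + K)) => m /neq0_mulr /hP [hj hk]; lia.
by apply: S_ext => p; rewrite !addnK [(l + p)%N]addnC.
Qed.

End FiniteSupportSums.

(** * Laurent series bounded above *)

Section LaurentSeries.
Variable C : numFieldType.
Local Notation lser := (lser C).
Local Notation HZ := (@fsumZ_supp C).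

Definition dle (f : lser) (N : int) := forall n, N < n -> f n = 0.

(** The falling factorial (d+1)(d+2)...(d+m), so that
    (z^(d+m))^(m) = ffz d m z^d. *)
Definition ffz (d : int) (m : nat) : C := \prod_(j < m) (d + j%:Z + 1)%:~R.

Lemma lderivnE m f d : lderivn m f d = ffz d m * f (d + m%:Z).
Proof.
elim: m d => [|m ih] d; first by rewrite /ffz big_ord0 mul1r addr0.
rewrite /lderivn iterS -/(lderivn m f) /lderiv ih /ffz big_ord_recl mulrA.
congr (_ * _ * f _); last by lia.
  by rewrite /= addr0.
by apply: eq_bigr => j _; rewrite lift0; congr (_%:~R); lia.
Qed.

Lemma lderivnS m (f : lser) : lderivn m.+1 f = lderiv (lderivn m f).
Proof. by rewrite /lderivn iterS. Qed.

Lemma lderivn_add a b (f : lser) : lderivn a (lderivn b f) = lderivn (a + b) f.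
Proof. by rewrite /lderivn iterD. Qed.

Lemma lderivn0 m : lderivn m (fun _ => 0 : C) = (fun _ => 0).
Proof. by apply: boolp.funext => n; rewrite lderivnE mulr0. Qed.

Lemma lderiv_lone : lderiv (lone C) = (fun _ => 0).
Proof.
apply: boolp.funext => n; rewrite /lderiv /lone.
by case: (eqVneq (n + 1) 0) => [->|]; rewrite ?mul0r ?mulr0.
Qed.

Lemma lderivn_lone i : (0 < i)%N -> lderivn i (lone C) = (fun _ => 0).
Proof.
case: i => // i _; rewrite -addn1 -lderivn_add.
by rewrite [lderivn 1 _]lderiv_lone lderivn0.
Qed.

Lemma lderiv_lz : lderiv (lz C) = lone C.
Proof.
apply: boolp.funext => n; rewrite /lderiv /lz /lone.
case: (eqVneq n 0) => [->|hn]; first by rewrite add0r eqxx mulr1.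
have -> : (n + 1 == 1) = false by apply/eqP => h; move/eqP: hn; apply; lia.
by rewrite mulr0.
Qed.

Lemma dle_lderiv (f : lser) N : dle f N -> dle (lderiv f) (N - 1).
Proof. by move=> h n hn; rewrite /lderiv h ?mulr0 //; lia. Qed.

Lemma dle_lderivn m f N : dle f N -> dle (lderivn m f) (N - m%:Z).
Proof. by move=> h n hn; rewrite lderivnE h ?mulr0 //; lia. Qed.

Lemma dle_lone : dle (lone C) 0.
Proof. by move=> n hn; rewrite /lone; case: eqP => // h; move: hn; rewrite h ltxx. Qed.

Lemma dle_scale (g : lser) c N : dle g N -> dle (fun e => c * g e) N.
Proof. by move=> hg n hn; rewrite hg ?mulr0. Qed.

Lemma dle_lin (f g : lser) c Nf Ng N : dle f Nf -> dle g Ng -> Nf <= N -> Ng <= N ->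
  dle (fun e => f e + c * g e) N.
Proof. by move=> hf hg h1 h2 n hn; rewrite hf ?hg ?mulr0 ?addr0 //; lia. Qed.

Lemma dle_fsumN (h : nat -> lser) N : (forall l, dle (h l) N) ->
  dle (fun e => fsumN (fun l => h l e)) N.
Proof. by move=> hh n hn; apply: (S0 (@fsumN_supp C)) => l; apply: hh. Qed.

Definition del (p : int) : lser := fun n => if n == p then 1 else 0.

Lemma dle_del p : dle (del p) p.
Proof. by move=> n hn; rewrite /del; case: eqP => // h; move: hn; rewrite h ltxx. Qed.

(** (z^n)^(m) = 0 for m > n. *)
Lemma ffz_zero n m : (n < m)%N -> ffz (n%:Z - m%:Z) m = 0.
Proof.
move=> hnm; have hj : (m - n - 1 < m)%N by lia.
rewrite /ffz (bigD1 (Ordinal hj)) //=.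
have -> : n%:Z - m%:Z + (m - n - 1)%N%:Z + 1 = 0 by lia.
by rewrite mul0r.
Qed.

(** Characteristic zero: m! is invertible. *)
Lemma ffz0_neq0 n : ffz 0 n != 0.
Proof.
rewrite /ffz; elim: n => [|n ih]; first by rewrite big_ord0 oner_neq0.
by rewrite big_ord_recr mulf_neq0 //= intr_eq0; lia.
Qed.

Lemma lmul_fin f g Nf Ng n : dle f Nf -> dle g Ng -> fin (fun i => f i * g (n - i)).
Proof.
move=> hf hg; apply: (finZ_box (a := n - Ng) (b := Nf)) => x.
case: (ltrP Nf x) => [/hf -> |h1]; first by rewrite mul0r eqxx.
case: (ltrP Ng (n - x)) => [/hg -> |h2]; first by rewrite mulr0 eqxx.
by move=> _; apply/andP; split=> //; lia.
Qed.

Lemma dle_lmul f g Nf Ng : dle f Nf -> dle g Ng -> dle (lmul f g) (Nf + Ng).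
Proof.
move=> hf hg n hn; apply: (S0 HZ) => x.
case: (ltrP Nf x) => [/hf -> |h1]; first by rewrite mul0r.
by rewrite hg ?mulr0 //; lia.
Qed.

Lemma lmul_lonel f : lmul (lone C) f = f.
Proof.
apply: boolp.funext => n; rewrite /lmul (S_single HZ (a := 0)) /lone ?eqxx ?mul1r ?subr0 //.
by move=> x /negbTE ->; rewrite mul0r.
Qed.

Lemma lmul_loner f : lmul f (lone C) = f.
Proof.
apply: boolp.funext => n; rewrite /lmul (S_single HZ (a := n)) /lone ?subrr ?eqxx ?mulr1 //.
by move=> x xn; rewrite subr_eq0 eq_sym (negbTE xn) mulr0.
Qed.

Lemma lmul_lzr f n : lmul f (lz C) n = f (n - 1).
Proof.
rewrite /lmul (S_single HZ (a := n - 1)) /lz.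
  have -> : n - (n - 1) = 1 by lia.
  by rewrite eqxx mulr1.
move=> x xn; case: eqP => [h|]; last by rewrite mulr0.
move: xn; have -> : x = n - 1 by lia.
by rewrite eqxx.
Qed.

Lemma lmul0r g : lmul (fun _ => 0) g = (fun _ => 0 : C).
Proof. by apply: boolp.funext => n; apply: (S0 HZ) => x; rewrite mul0r. Qed.

Lemma lmulr0 g : lmul g (fun _ => 0) = (fun _ => 0 : C).
Proof. by apply: boolp.funext => n; apply: (S0 HZ) => x; rewrite mulr0. Qed.

Lemma lmulC (f g : lser) Nf Ng : dle f Nf -> dle g Ng -> lmul f g = lmul g f.
Proof.
move=> hf hg; apply: boolp.funext => n; rewrite /lmul.
rewrite -(S_bij HZ (f := fun x => n - x) (g := fun x => n - x)).
- by apply: S_ext => x /=; rewrite mulrC; have -> : n - (n - x) = x by lia.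
- by move=> x; lia.
- by move=> x; lia.
exact: lmul_fin hf hg.
Qed.

Lemma lmulA (a b c : lser) Na Nb Nc : dle a Na -> dle b Nb -> dle c Nc ->
  lmul a (lmul b c) = lmul (lmul a b) c.
Proof.
move=> ha hb hc; apply: boolp.funext => d; rewrite /lmul.
transitivity (fsumZ (fun x => fsumZ (fun y => a x * (b y * c (d - x - y))))).
  by apply: S_ext => x; rewrite -(S_scale HZ) //; exact: lmul_fin hb hc.
transitivity (fsumZ (fun z => fsumZ (fun x => a x * b (z - x) * c (d - z)))); last first.
  apply: S_ext => z; rewrite mulrC -(S_scale HZ); last exact: lmul_fin ha hb.
  by apply: S_ext => x; rewrite mulrC.
rewrite [RHS](S_fubini (s1 := zbox (d - Nc) (Na + Nb)) (s2 := zbox (d - Nb - Nc) Na) HZ HZ);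
  last first.
  move=> z x; case: (ltrP Na x) => [/ha ->|h1]; first by rewrite !mul0r eqxx.
  case: (ltrP Nb (z - x)) => [/hb ->|h2]; first by rewrite mulr0 mul0r eqxx.
  case: (ltrP Nc (d - z)) => [/hc ->|h3]; first by rewrite mulr0 eqxx.
  by move=> _; split; apply: mem_zbox; apply/andP; split; lia.
apply: S_ext => x; rewrite -(S_bij HZ (f := fun y => y - x) (g := fun y => y + x)).
- by apply: S_ext => y /=; rewrite mulrA; congr (_ * _ * c _); lia.
- by move=> y; rewrite subrK.
- by move=> y; rewrite addrK.
apply: (finZ_box (a := d - x - Nc) (b := Nb)) => y.
case: (ltrP Nb y) => [/hb ->|h2]; first by rewrite mul0r mulr0 eqxx.
case: (ltrP Nc (d - x - y)) => [/hc ->|h3]; first by rewrite !mulr0 eqxx.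
by move=> _; apply/andP; split; lia.
Qed.

Lemma lmul_sumr (J : Type) (r : seq J) (f : lser) (F : J -> lser) Nf n :
  dle f Nf -> (forall j, exists N, dle (F j) N) ->
  lmul f (fun e => \sum_(j <- r) F j e) n = \sum_(j <- r) lmul f (F j) n.
Proof.
move=> hf hF; rewrite /lmul -(S_sum HZ); last first.
  by move=> j; case: (hF j) => N hN; exact: lmul_fin hf hN.
by apply: S_ext => x; rewrite mulr_sumr.
Qed.

Lemma lmul_scaler (f g : lser) c Nf Ng n : dle f Nf -> dle g Ng ->
  lmul f (fun e => c * g e) n = c * lmul f g n.
Proof.
move=> hf hg; rewrite /lmul -(S_scale HZ); last exact: lmul_fin hf hg.
by apply: S_ext => x; rewrite mulrCA.
Qed.

Lemma lmul_addr (f g h : lser) Nf Ng Nh n : dle f Nf -> dle g Ng -> dle h Nh ->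
  lmul f (fun e => g e + h e) n = lmul f g n + lmul f h n.
Proof.
move=> hf hg hh; rewrite /lmul -(S_add HZ); [|exact: lmul_fin hf hg|exact: lmul_fin hf hh].
by apply: S_ext => x; rewrite mulrDr.
Qed.

Lemma leibniz1 (g h : lser) Ng Nh e : dle g Ng -> dle h Nh ->
  lderiv (lmul g h) e = lmul (lderiv g) h e + lmul g (lderiv h) e.
Proof.
move=> hg hh; have hg' := dle_lderiv hg; have hh' := dle_lderiv hh.
rewrite [lmul (lderiv g) h e]/lmul.
rewrite -(S_bij HZ (f := fun x => x - 1) (g := fun x => x + 1)); first last.
- exact: lmul_fin hg' hh.
- by move=> x; rewrite addrK.
- by move=> x; rewrite subrK.
rewrite /lmul -(S_add HZ); last first.
- exact: lmul_fin hg hh'.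
- apply: (finZ_box (a := e + 1 - Nh) (b := Ng + 1)) => x.
  case: (ltrP (Ng + 1) x) => [h1|h1].
    by rewrite (hg' (x - 1)) ?mul0r ?eqxx //; lia.
  case: (ltrP Nh (e - (x - 1))) => [/hh ->|h2]; first by rewrite mulr0 eqxx.
  by move=> _; apply/andP; split; lia.
rewrite {1}/lderiv -(S_scale HZ); last exact: lmul_fin hg hh.
apply: S_ext => x /=; rewrite /lderiv.
have -> : x - 1 + 1 = x by lia.
have -> : e - (x - 1) = e + 1 - x by lia.
have -> : e - x + 1 = e + 1 - x by lia.
have -> : (e + 1)%:~R = x%:~R + (e + 1 - x)%:~R :> C.
  by rewrite -intrD; congr (_%:~R); lia.
ring.
Qed.

Lemma leibniz (g h : lser) Ng Nh m e : dle g Ng -> dle h Nh ->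
  lderivn m (lmul g h) e =
  \sum_(0 <= j < m.+1) 'C(m, j)%:R * lmul (lderivn j g) (lderivn (m - j)%N h) e.
Proof.
move=> hg hh; elim: m e => [|m ih] e; first by rewrite big_nat1 bin0 mul1r.
set P := fun j k => lmul (lderivn j g) (lderivn k h) e.
transitivity (\sum_(0 <= j < m.+1) 'C(m, j)%:R * (P j.+1 (m - j)%N + P j (m.+1 - j)%N)).
  rewrite lderivnS {1}/lderiv ih mulr_sumr; apply: eq_big_nat => j /andP[_ hj].
  rewrite mulrCA; congr (_ * _).
  rewrite -/(lderiv (lmul (lderivn j g) (lderivn (m - j)%N h)) e).
  rewrite (leibniz1 _ (dle_lderivn (m:=j) hg) (dle_lderivn (m:=(m - j)%N) hh)) /P -!lderivnS.
  by rewrite subSn.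
under eq_bigr do rewrite mulrDr.
rewrite big_split /= [in RHS]big_nat_recl // bin0 mul1r subn0.
under [in RHS]eq_bigr do rewrite binS natrD mulrDl subSS.
rewrite [in RHS]big_split /= addrA [in RHS]addrC; congr (_ + _).
rewrite [in LHS]big_nat_recl // bin0 mul1r subn0.
rewrite [in RHS]big_nat_recr //= bin_small // mul0r addr0.
by congr (_ + _); apply: eq_bigr => j _; rewrite subSS.
Qed.

End LaurentSeries.

(** * Differential operators acting on H

    The central fact is [act_dcomp]: the formal composition [dcomp] acts as
    the composition of actions.  Since operators are determined by their
    action on the monomials z^n ([faithful]), [dcomp] is associative. *)

Section Operators.
Variable C : numFieldType.
Local Notation lser := (lser C).
Local Notation op := (op C).
Local Notation HZ := (@fsumZ_supp C).
Local Notation HN := (@fsumN_supp C).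

Definition bnd (A : op) (N : int) := forall m, dle (A m) N.

Lemma bnd_op1 : bnd (op1 C) 0.
Proof. by move=> m n hn; rewrite /op1; case: eqP => // _; apply: dle_lone. Qed.

Lemma bnd_opz : bnd (opz C) 1.
Proof.
move=> m n hn; rewrite /opz; case: eqP => // _; rewrite /lz.
by case: eqP => // h; move: hn; rewrite h ltxx.
Qed.

Lemma bnd_dcomp (A B : op) NA NB : bnd A NA -> bnd B NB -> bnd (dcomp A B) (NA + NB).
Proof.
move=> hA hB k n hn; apply: big1 => l _; apply: (S0 HN) => i.
by rewrite (dle_lmul (hA _) (dle_lderivn (m:=i) (hB l))) ?mulr0 //; lia.
Qed.

Lemma act_fin (A : op) (f : lser) NA Nf d : bnd A NA -> dle f Nf ->
  fin (fun m => lmul (A m) (lderivn m f) d).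
Proof.
move=> hA hf; apply: (finN_box (K := (absz (NA + Nf - d)%R).+1)) => m.
apply: contraR; rewrite -leqNgt => hm; apply/eqP.
by apply: (dle_lmul (hA m) (dle_lderivn (m:=m) hf)); lia.
Qed.

Lemma dle_act (A : op) (f : lser) NA Nf : bnd A NA -> dle f Nf -> dle (act A f) (NA + Nf).
Proof.
move=> hA hf n hn; apply: (S0 HN) => m.
by apply: (dle_lmul (hA m) (dle_lderivn (m:=m) hf)); lia.
Qed.

Lemma act_lin (A : op) (f g : lser) c NA Nf Ng d : bnd A NA -> dle f Nf -> dle g Ng ->
  act A (fun e => f e + c * g e) d = act A f d + c * act A g d.
Proof.
move=> hA hf hg; rewrite /act.
have E m : lderivn m (fun e => f e + c * g e) =
    (fun e => lderivn m f e + c * lderivn m g e).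
  by apply: boolp.funext => e; rewrite !lderivnE; ring.
under S_ext => m do rewrite E (lmul_addr _ (hA m) (dle_lderivn (m:=m) hf)
   (dle_scale c (dle_lderivn (m:=m) hg)))
   (lmul_scaler _ _ (hA m) (dle_lderivn (m:=m) hg)).
rewrite (S_add HN); [|exact: (act_fin _ hA hf)|exact: (fin_scale c (act_fin _ hA hg))].
by rewrite (S_scale HN _ (act_fin _ hA hg)).
Qed.

Lemma lmul_fsumNr (a : lser) (h : nat -> lser) Na Nh n : dle a Na ->
  (forall l, dle (h l) (Nh - l%:Z)) ->
  lmul a (fun e => fsumN (fun l => h l e)) n = fsumN (fun l => lmul a (h l) n).
Proof.
move=> ha hh; rewrite /lmul.
have hfin x : fin (fun l => h l (n - x)).
  apply: (finN_box (K := (absz (Nh - (n - x))%R).+1)) => l.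
  by apply: contraR; rewrite -leqNgt => hl; apply/eqP; apply: hh; lia.
under S_ext => x do rewrite -(S_scale HN _ (hfin x)).
rewrite (S_fubini (s1 := zbox (n - Nh) Na) (s2 := iota 0 (absz (Nh - n + Na)%R).+1) HZ HN) //.
move=> x l; case: (ltrP Na x) => [/ha ->|h1]; first by rewrite mul0r eqxx.
case: (ltrP (Nh - l%:Z) (n - x)) => [/hh ->|h2]; first by rewrite mulr0 eqxx.
move=> _; split; first by apply: mem_zbox; lia.
by rewrite mem_iota; lia.
Qed.

Lemma deriv_act (B : op) (f : lser) NB Nf m : bnd B NB -> dle f Nf ->
  lderivn m (act B f) = fun e => fsumN (fun l => lderivn m (lmul (B l) (lderivn l f)) e).
Proof.
move=> hB hf; apply: boolp.funext => e; rewrite lderivnE /act -(S_scale HN); last first.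
  exact: act_fin hB hf.
by apply: S_ext => l; rewrite lderivnE.
Qed.

Definition comp_term (A B : op) (f : lser) (d : int) (m l j k : nat) : C :=
  lmul (lmul (A m) (lderivn j (B l))) (lderivn k f) d.

Lemma act_dcomp_expand (A B : op) (f : lser) NA NB Nf d :
  bnd A NA -> bnd B NB -> dle f Nf ->
  act (dcomp A B) f d = fsumN (fun k => \sum_(0 <= l < k.+1)
     fsumN (fun i => 'C(k - l + i, i)%:R * comp_term A B f d (k - l + i)%N l i k)).
Proof.
move=> hA hB hf; have hfk k := dle_lderivn (m:=k) hf.
have hAB m i l := dle_lmul (hA m) (dle_lderivn (m:=i) (hB l)).
rewrite /act; apply: S_ext => k.
rewrite (lmulC (bnd_dcomp hA hB k) (hfk k)) /dcomp (lmul_sumr _ _ (hfk k)); last first.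
  move=> l; exists (NA + NB); apply: dle_fsumN => i n hn.
  by rewrite (hAB _ i l) ?mulr0 //; lia.
rewrite -(big_mkord xpredT (fun l => lmul (lderivn k f) (fun e => fsumN (fun i =>
   'C(k - l + i, i)%:R * lmul (A (k - l + i)%N) (lderivn i (B l)) e)) d)).
apply: eq_big_nat => l _; rewrite (lmul_fsumNr (Nh := NA + NB) _ (hfk k)); last first.
  by move=> i n hn; rewrite (hAB _ i l) ?mulr0 //; lia.
apply: S_ext => i; rewrite (lmul_scaler _ _ (hfk k) (hAB _ i l)).
by rewrite (lmulC (hfk k) (hAB _ i l)).
Qed.

Lemma act_act_expand (A B : op) (f : lser) NA NB Nf d :
  bnd A NA -> bnd B NB -> dle f Nf ->
  act A (act B f) d = fsumN (fun m => fsumN (fun l =>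
     \sum_(0 <= j < m.+1) 'C(m, j)%:R * comp_term A B f d m l j (l + (m - j))%N)).
Proof.
move=> hA hB hf; have hfl l := dle_lderivn (m:=l) hf.
have hBj j l := dle_lderivn (m:=j) (hB l).
have hflk l k := dle_lderivn (m:=k) (hfl l).
rewrite /act; apply: S_ext => m.
rewrite (deriv_act m hB hf) (lmul_fsumNr (Nh := NB + Nf) _ (hA m)); last first.
  by move=> l n hn; rewrite (dle_lderivn (dle_lmul (hB l) (hfl l))) //; lia.
apply: S_ext => l.
have -> : lderivn m (lmul (B l) (lderivn l f)) = fun e => \sum_(0 <= j < m.+1)
    'C(m, j)%:R * lmul (lderivn j (B l)) (lderivn (m - j)%N (lderivn l f)) e.
  by apply: boolp.funext => e; apply: leibniz (hB l) (hfl l).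
rewrite (lmul_sumr _ _ (hA m)); last first.
  move=> j; exists (NB + Nf) => n hn.
  by rewrite (dle_lmul (hBj j l) (hflk l (m - j)%N)) ?mulr0 //; lia.
apply: eq_bigr => j _.
rewrite (lmul_scaler _ _ (hA m) (dle_lmul (hBj j l) (hflk l (m - j)%N))).
rewrite (lmulA (hA m) (hBj j l) (hflk l (m - j)%N)).
by rewrite /comp_term lderivn_add addnC.
Qed.

Lemma act_dcomp (A B : op) (f : lser) NA NB Nf d : bnd A NA -> bnd B NB -> dle f Nf ->
  act (dcomp A B) f d = act A (act B f) d.
Proof.
move=> hA hB hf; rewrite (act_dcomp_expand _ hA hB hf) (act_act_expand _ hA hB hf).
set K := (absz (NA + NB + Nf - d)%R).+1.
apply: (reindexN (K := K)) => m l j k hne.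
suff : ~~ ((K <= j) || (K <= k))%N by rewrite negb_or -!ltnNge => /andP.
apply: contra hne => hjk; apply/eqP.
apply: (dle_lmul (dle_lmul (hA m) (dle_lderivn (m:=j) (hB l))) (dle_lderivn (m:=k) hf)).
by case/orP: hjk => h; lia.
Qed.

Lemma act_del (A : op) n d :
  act A (del C n%:Z) d = \sum_(m < n.+1) A m (d - (n%:Z - m%:Z)) * ffz C (n%:Z - m%:Z) m.
Proof.
have E m : lmul (A m) (lderivn m (del C n%:Z)) d =
    A m (d - (n%:Z - m%:Z)) * ffz C (n%:Z - m%:Z) m.
  rewrite /lmul (S_single HZ (a := d - (n%:Z - m%:Z))).
    rewrite lderivnE /del; have -> : d - (d - (n%:Z - m%:Z)) = n%:Z - m%:Z by lia.
    have -> : n%:Z - m%:Z + m%:Z = n%:Z by lia.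
    by rewrite eqxx mulr1.
  move=> x hx; rewrite lderivnE /del; case: eqP => [h|]; last by rewrite !mulr0.
  move: hx; have -> : x = d - (n%:Z - m%:Z) by lia.
  by rewrite eqxx.
rewrite /act (fsumN_ord (K := n.+1)); first by apply: eq_bigr => m _; rewrite E.
move=> m; rewrite E; apply: contraR; rewrite -leqNgt => hm.
by rewrite ffz_zero ?mulr0.
Qed.

Lemma faithful (A A' : op) :
  (forall n d, act A (del C n%:Z) d = act A' (del C n%:Z) d) -> A = A'.
Proof.
move=> H; apply: boolp.funext; elim/ltn_ind => n IH; apply: boolp.funext => d.
have := H n d; rewrite !act_del !big_ord_recr /=.
under eq_bigr => i _ do rewrite IH //=.
move/addrI; rewrite subrr subr0; move/mulIf; apply; exact: ffz0_neq0.
Qed.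

Lemma dcompA (A B D : op) NA NB ND : bnd A NA -> bnd B NB -> bnd D ND ->
  dcomp A (dcomp B D) = dcomp (dcomp A B) D.
Proof.
move=> hA hB hD; apply: faithful => n d; have hz : dle (del C n%:Z) n%:Z by apply: dle_del.
rewrite (act_dcomp _ hA (bnd_dcomp hB hD) hz) (act_dcomp _ (bnd_dcomp hA hB) hD hz).
have -> : act (dcomp B D) (del C n%:Z) = act B (act D (del C n%:Z)).
  by apply: boolp.funext => e; rewrite (act_dcomp _ hB hD hz).
by rewrite (act_dcomp _ hA hB (dle_act hD hz)).
Qed.

Lemma dcomp_op1l (Y : op) : dcomp (op1 C) Y = Y.
Proof.
apply: boolp.funext => k; apply: boolp.funext => d.
rewrite /dcomp big_ord_recr /= big1 ?add0r.
  rewrite subnn (S_single HN (a := 0%N)) /op1 /=; first by rewrite lmul_lonel mul1r.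
  by move=> i /negbTE i0; rewrite add0n i0 lmul0r mulr0.
move=> l _; apply: (S0 HN) => i /=.
rewrite /op1; have -> : (k - l + i == 0)%N = false by have := ltn_ord l; lia.
by rewrite lmul0r mulr0.
Qed.

Lemma dcomp_op1r (Y : op) : dcomp Y (op1 C) = Y.
Proof.
apply: boolp.funext => k; apply: boolp.funext => d.
rewrite /dcomp big_ord_recl /= big1 ?addr0.
  rewrite subn0 (S_single HN (a := 0%N)) /op1 /=; first by rewrite addn0 bin0 mul1r lmul_loner.
  by move=> i i0; rewrite lderivn_lone ?lmulr0 ?mulr0 // lt0n.
by move=> l _; apply: (S0 HN) => i /=; rewrite lderivn0 lmulr0 mulr0.
Qed.

Lemma dcomp_opz (B : op) k d :
  dcomp B (opz C) k d = B k (d - 1) + (k.+1)%:R * B k.+1 d.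
Proof.
rewrite /dcomp big_ord_recl /= big1 ?addr0; last first.
  by move=> l _; apply: (S0 HN) => i /=; rewrite lderivn0 lmulr0 mulr0.
have lz'' : lderivn 2 (lz C) = (fun _ => 0) by rewrite /lderivn /= lderiv_lz lderiv_lone.
rewrite subn0 (fsumN_ord (K := 2)); last first.
  move=> i; apply: contraR; rewrite -leqNgt => hi; apply/eqP.
  case: i hi => [|[|i]] // _.
  by rewrite -addn2 -lderivn_add lz'' lderivn0 lmulr0 mulr0.
rewrite big_ord_recr big_ord_recr big_ord0 /= add0r addn0 bin0 mul1r lmul_lzr.
by rewrite /lderivn /= lderiv_lz lmul_loner addn1 bin1.
Qed.

End Operators.

(** * The Sato operator is invertible

    Acting on series bounded above, G is "unitriangular": it fixes the top
    coefficient ([actG_top]) and only looks at coefficients of degree at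
    least the one it computes ([actG_local]).  Hence its action is injective
    and, by solving the triangular system degree by degree, surjective.
    Solving G X = 1 order by order in d_z with this inverse gives a right
    inverse [Xop]; cancelling G shows it is also a left inverse, so it is
    the operator [opinv G] chosen in the definition of Q_W. *)

Section SatoOperator.
Variable C : numFieldType.
Local Notation lser := (lser C).
Local Notation op := (op C).
Local Notation HZ := (@fsumZ_supp C).
Local Notation HN := (@fsumN_supp C).
Variable G : op.
Hypothesis hG : inDminus (opsub G (op1 C)).

Lemma G_nonneg m a : 0 <= a -> G m a = op1 C m a.
Proof. by move=> ha; have := hG m ha; rewrite /opsub => /eqP; rewrite subr_eq0 => /eqP. Qed.

Lemma G_pos m a : 0 < a -> G m a = 0.
Proof.
move=> ha; rewrite G_nonneg ?ltW // /op1; case: eqP => // _.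
by rewrite /lone; case: eqP => // h; move: ha; rewrite h.
Qed.

Lemma G_m0 m a : m <> 0%N -> 0 <= a -> G m a = 0.
Proof. by move=> hm ha; rewrite G_nonneg // /op1; case: eqP. Qed.

Lemma bndG : bnd G 0.
Proof. by move=> m n hn; apply: G_pos. Qed.

Lemma G_lower m : m <> 0%N -> dle (G m) (-1).
Proof. by move=> hm n hn; apply: G_m0 => //; lia. Qed.

Lemma actG_top (f : lser) M : dle f M -> act G f M = f M.
Proof.
move=> hf; rewrite /act (S_single HN (a := 0%N)).
  rewrite /lmul /lderivn /= (S_single HZ (a := 0)).
    by rewrite G_nonneg // /op1 /lone /= mul1r subr0.
  move=> x hx; case: (ltrP 0 x) => [/G_pos ->|hx0]; first by rewrite mul0r.
  have hx1 : x < 0 by rewrite lt_neqAle hx hx0.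
  by rewrite hf ?mulr0 //; lia.
move=> m hm; rewrite /lmul; apply: (S0 HZ) => a.
case: (ltrP a 0) => ha; last by rewrite G_m0 ?mul0r //; move/eqP: hm.
by rewrite lderivnE hf ?mulr0 //; lia.
Qed.

Lemma actG_local (f g : lser) n : (forall q, n <= q -> f q = g q) -> act G f n = act G g n.
Proof.
move=> h; rewrite /act; apply: S_ext => m; rewrite /lmul; apply: S_ext => a.
case: (ltrP 0 a) => ha; first by rewrite G_pos ?mul0r.
by rewrite !lderivnE h //; lia.
Qed.

(** The action of G is injective on series bounded above: the
    difference of two preimages vanishes degree by degree from the top. *)
Lemma actG_inj (f g : lser) Nf Ng : dle f Nf -> dle g Ng -> act G f = act G g -> f = g.
Proof.
move=> hf hg hfg; set N := (`|Nf|%:Z + `|Ng|%:Z).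
set D := fun e => f e + (-1) * g e.
have hD : dle D N by apply: (dle_lin _ hf hg); lia.
have aD n : act G D n = 0 by rewrite (act_lin _ _ bndG hf hg) hfg mulN1r subrr.
have H (j : nat) : dle D (N - j%:Z).
  elim: j => [|j ih]; first by move=> n hn; apply: hD; lia.
  move=> n hn; case: (eqVneq n (N - j%:Z)) => [->|hne]; last by apply: ih; lia.
  by rewrite -(actG_top ih) aD.
apply: boolp.funext => n; apply/eqP; rewrite -subr_eq0 -mulN1r.
by apply/eqP; have := H (absz (N - n)).+1 n; rewrite /D => -> //; lia.
Qed.

(** The j-th step of the triangular solve of G Y = h for h bounded by [M]:
    correct the coefficient of degree M - j. *)
Fixpoint tri_solve (h : lser) (M : int) (j : nat) : lser :=
  match j with
  | 0%N => fun _ => 0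
  | j'.+1 => let Y := tri_solve h M j' in
      fun n => Y n + (h (M - j'%:Z) - act G Y (M - j'%:Z)) * del C (M - j'%:Z) n
  end.

Lemma tri_solve_spec (h : lser) M j : dle h M ->
  dle (tri_solve h M j) M /\
  (forall n, M - j%:Z < n -> act G (tri_solve h M j) n = h n).
Proof.
move=> hh; elim: j => [|j [ih1 ih2]].
  split=> [n _ //|n hn]; rewrite hh; last by lia.
  by rewrite /act; apply: (S0 HN) => m; rewrite lderivn0 lmulr0.
set p := M - j%:Z.
have hp : dle (del C p) M by move=> n hn; rewrite /del; case: eqP => // hn2; lia.
have hdp : dle (del C p) p by apply: dle_del.
split=> [n hn /=|n hn /=]; first by rewrite ih1 // (hp n hn) mulr0 addr0.
rewrite (act_lin _ _ bndG ih1 hdp).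
case: (eqVneq n p) => [->|hne].
  by rewrite (actG_top hdp) /del eqxx mulr1 addrC subrK.
by rewrite (dle_act bndG hdp) ?mulr0 ?addr0 ?ih2 //; lia.
Qed.

Lemma tri_solve_eq (h : lser) M a b n : M - a%:Z < n -> M - b%:Z < n ->
  tri_solve h M a n = tri_solve h M b n.
Proof.
have stable j : M - j%:Z < n -> tri_solve h M j.+1 n = tri_solve h M j n.
  move=> hn /=; rewrite /del; case: eqP => [e|_]; last by rewrite mulr0 addr0.
  by move: hn; rewrite e ltxx.
wlog hab : a b / (a <= b)%N.
  by move=> W ha hb; case: (leqP a b) => [/W|/ltnW /W]; [apply|move=> W'; rewrite W'].
move=> ha _; rewrite -(subnKC hab); elim: (b - a)%N => [|k ih]; first by rewrite addn0.
by rewrite addnS stable -?ih //; lia.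
Qed.

Lemma actG_surj (h : lser) M : dle h M -> exists Y, dle Y M /\ act G Y = h.
Proof.
move=> hh; exists (fun n => tri_solve h M (absz (M - n)).+1 n); split.
  by move=> n hn; case: (tri_solve_spec (absz (M - n)).+1 hh) => H _; apply: H.
apply: boolp.funext => n.
rewrite (actG_local (g := tri_solve h M (absz (M - n)).+1)).
  by case: (tri_solve_spec (absz (M - n)).+1 hh) => _ H; apply: H; lia.
by move=> q hq; apply: tri_solve_eq; lia.
Qed.

Definition ginv (h : lser) : lser :=
  epsilon (inhabits (fun _ : int => 0 : C)) (fun Y => (exists N, dle Y N) /\ act G Y = h).

Lemma ginv_spec (h : lser) M : dle h M -> dle (ginv h) M /\ act G (ginv h) = h.
Proof.
move=> hh; have [Y [hY aY]] := actG_surj hh.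
have E : exists Y, (exists N, dle Y N) /\ act G Y = h by exists Y; split => //; exists M.
have [[N hN] a] := epsilon_spec (inhabits (fun _ : int => 0 : C)) _ E.
rewrite -/(ginv h) in hN a *.
by have -> : ginv h = Y by apply: (actG_inj hN hY); rewrite a aY.
Qed.

(** The part of (G Y)_k involving only Y_0, ..., Y_(k-1); the remaining
    part is G Y_k ([dcomp_last]). *)
Definition lower_part (Y : op) (k : nat) : lser := fun d =>
  \sum_(l < k) fsumN (fun i => 'C(k - l + i, i)%:R * lmul (G (k - l + i)%N) (lderivn i (Y l)) d).

Lemma dcomp_last (Y : op) k d : dcomp G Y k d = lower_part Y k d + act G (Y k) d.
Proof.
rewrite /dcomp big_ord_recr /=; congr (_ + _).
by rewrite subnn /act; apply: S_ext => i; rewrite add0n binn mul1r.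
Qed.

(** The lower part has negative degree, since G_m in H_- for m > 0. *)
Lemma dle_lower_part (Y : op) k :
  (forall l, (l < k)%N -> dle (Y l) 0) -> dle (lower_part Y k) (-1).
Proof.
move=> hY d hd; apply: big1 => l _; apply: (S0 HN) => i.
have hl := ltn_ord l.
rewrite (dle_lmul (G_lower (m := (k - l + i)%N) _) (dle_lderivn (m:=i) (hY l hl))) ?mulr0 //.
  by lia.
by lia.
Qed.

(** Order by order solution of G X = 1: X_0 = G^(-1) 1 and
    X_k = - G^(-1) (lower part of (G X)_k); [right_inv_upto k] lists
    X_0, ..., X_k. *)
Fixpoint right_inv_upto (k : nat) : nat -> lser :=
  match k with
  | 0%N => fun _ => ginv (lone C)
  | k'.+1 => let F := right_inv_upto k' in
      fun l => if (l <= k')%N then F l else ginv (fun d => - lower_part F k'.+1 d)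
  end.

Definition Xop : op := fun l => right_inv_upto l l.

Lemma right_inv_upto_eq k l : (l <= k)%N -> right_inv_upto k l = Xop l.
Proof.
elim: k => [|k ih] hl; first by move: hl; rewrite leqn0 => /eqP ->.
rewrite /=; case: leqP => h; first exact: ih.
have -> : l = k.+1 by lia.
by rewrite /Xop /= ltnn.
Qed.

Lemma XopS k : Xop k.+1 = ginv (fun d => - lower_part Xop k.+1 d).
Proof.
rewrite {1}/Xop /= ltnn; congr ginv; apply: boolp.funext => d; congr (- _).
apply: eq_bigr => l _; apply: S_ext => i.
by rewrite right_inv_upto_eq // -ltnS.
Qed.

Lemma bndX : bnd Xop 0.
Proof.
move=> k; elim/ltn_ind: k => -[|k] IH.
  by case: (ginv_spec (@dle_lone C)).
rewrite XopS; apply: (ginv_spec (M := 0) _).1 => d hd.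
by rewrite (dle_lower_part IH) ?oppr0 //; lia.
Qed.

(** X is a right inverse: (G X)_k = lower part + G X_k = 1_k. *)
Lemma GX : dcomp G Xop = op1 C.
Proof.
apply: boolp.funext => -[|k]; apply: boolp.funext => d; rewrite dcomp_last.
  by rewrite /lower_part big_ord0 add0r; case: (ginv_spec (@dle_lone C)) => _ ->.
have hlow : dle (fun d => - lower_part Xop k.+1 d) 0.
  by move=> e he; rewrite (dle_lower_part (fun l _ => bndX l)) ?oppr0 //; lia.
by rewrite XopS (ginv_spec hlow).2 /op1 /= subrr.
Qed.

Lemma Gcancel (U V : op) : inD U -> inD V -> dcomp G U = dcomp G V -> U = V.
Proof.
move=> hU hV hUV; apply: boolp.funext; elim/ltn_ind => k IH.
have E d : act G (U k) d = act G (V k) d.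
  have := congr1 (fun Y => Y k d) hUV; rewrite /= !dcomp_last.
  have -> : lower_part U k d = lower_part V k d.
    by apply: eq_bigr => l _; rewrite IH.
  by move/addrI.
case: (hU k) => NU hNU; case: (hV k) => NV hNV.
by apply: (actG_inj hNU hNV); apply: boolp.funext.
Qed.

(** X is also a left inverse: G (X G) = (G X) G = G = G 1. *)
Lemma XG : dcomp Xop G = op1 C.
Proof.
apply: Gcancel.
- by move=> m; exists (0 + 0); apply: (bnd_dcomp bndX bndG).
- by move=> m; exists 0; apply: bnd_op1.
by rewrite (dcompA bndG bndX bndG) GX dcomp_op1l dcomp_op1r.
Qed.

Lemma opinvE : opinv G = Xop.
Proof.
have E : exists X, inD X /\ dcomp G X = op1 C /\ dcomp X G = op1 C.
  by exists Xop; split=> [m|]; [exists 0; apply: bndX|split; [exact: GX|exact: XG]].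
have [h1 [h2 _]] := epsilon_spec (inhabits (op1 C)) _ E.
rewrite -/(opinv G) in h1 h2.
by apply: Gcancel => //; [move=> m; exists 0; apply: bndX|rewrite h2 GX].
Qed.

Lemma QG : dcomp (Qop G) G = dcomp G (opz C).
Proof.
rewrite /Qop opinvE -(dcompA (bnd_dcomp bndG (bnd_opz C)) bndX bndG) XG.
by rewrite dcomp_op1r.
Qed.

End SatoOperator.

(** * Uniqueness *)

(** (Q B)_k involves only B_0, ..., B_k while (B z)_k = z B_k + (k+1) B_(k+1);
    hence a solution of Q B = B z is determined by its coefficient B_0. *)
Lemma intertwiner_unique (C : numFieldType) (Q B B' : op C) :
  dcomp Q B = dcomp B (opz C) -> dcomp Q B' = dcomp B' (opz C) ->
  B 0%N = B' 0%N -> B = B'.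
Proof.
move=> hB hB' h0; apply: boolp.funext; elim/ltn_ind => -[//|k] IH.
apply: boolp.funext => d.
have QBk : dcomp Q B k d = dcomp Q B' k d.
  by rewrite /dcomp; apply: eq_bigr => l _; rewrite IH //; have := ltn_ord l; lia.
move: QBk; rewrite hB hB' !dcomp_opz IH // => /addrI.
by apply: mulfI; rewrite pnatr_eq0.
Qed.

(** The wave function is G . 1 = G_0. *)
Lemma sato_op_wave (C : numFieldType) (W : lser C -> Prop) (G : op C) (Psi : lser C) :
  Gr0plus W -> is_sato_op W G -> is_wave_fn W Psi -> G 0%N = Psi.
Proof.
move=> [_ [_ _ _ hinj _]] [hGm hW] [WPsi hPsi].
have aG : act G (lone C) = G 0%N.
  apply: boolp.funext => d; rewrite /act (S_single (@fsumN_supp C) (a := 0%N)).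
    by rewrite /lderivn /= lmul_loner.
  by move=> m hm; rewrite lderivn_lone ?lmulr0 // lt0n.
have WG : W (G 0%N).
  rewrite -aG; apply/hW; exists (lone C); split=> //; split.
    by exists 0; apply: dle_lone.
  by move=> n hn; rewrite /lone; case: eqP => // h; move: hn; rewrite h ltxx.
apply: hinj => //; apply: boolp.funext => n; rewrite /proj_plus; case: ifP => // hn.
rewrite (G_nonneg hGm) //; apply/eqP; rewrite eq_sym -subr_eq0; apply/eqP.
exact: hPsi.
Qed.

Unset Implicit Arguments.

Theorem mainTheorem6 (R : realType) (W : lser R[i] -> Prop) (G : op R[i])
    (Psi : lser R[i]) (B : op R[i]) :
  Gr0plus W -> is_sato_op W G -> is_wave_fn W Psi ->
  inD B -> B 0%N = Psi ->
  dcomp (Qop G) B = dcomp B (opz R[i]) ->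
  B = G.
Proof.
move=> hW hG hPsi _ hB0 hQB.
have hGm : inDminus (opsub G (op1 R[i])) by case: hG.
apply: (intertwiner_unique hQB (QG hGm)).
by rewrite hB0 (sato_op_wave hW hG hPsi).
Qed.
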